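(* Let $\mathcal{S}\subseteq 2^{[n]}$ be a Sperner family and $A\subseteq[n]$ a fixed set, and define $h_A:\mathcal{S}\to 2^{[n]}$ by $h_A(S)=S\cap A$. Then $\mathcal{F}=\mathcal{F}(\mathcal{S},h_A)$ is s-extremal and $\mathrm{Sh}(\mathcal{F})=\mathcal{H}(\mathcal{S})$.
   Context: $[n]=\{1,\dots,n\}$. A Sperner family is a family of sets none of which is contained in another. $\mathcal{F}$ shatters $S$ if $\{F\cap S:F\in\mathcal{F}\}=2^S$; $\mathrm{Sh}(\mathcal{F})$ is the family of shattered sets; $\mathcal{F}$ is s-extremal if $|\mathrm{Sh}(\mathcal{F})|=|\mathcal{F}|$. For $H\subseteq S\subseteq[n]$, $\mathcal{Q}_{S,H}=\{H\cup B: B\subseteq[n]\setminus S\}$. $\mathcal{H}(\mathcal{S})=\{F\subseteq[n]: \text{no } S\in\mathcal{S} \text{ satisfies } S\subseteq F\}$, and for $h:\mathcal{S}\to2^{[n]}$ with $h(S)\subseteq S$, $\mathcal{F}(\mathcal{S},h)=2^{[n]}\setminus\bigcup_{S\in\mathcal{S}}\mathcal{Q}_{S,h(S)}$. *)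

From mathcomp Require Import all_boot.
Set Implicit Arguments. Unset Strict Implicit. Unset Printing Implicit Defensive.

Definition sperner (n : nat) (S : {set {set 'I_n}}) : Prop :=
  forall A B, A \in S -> B \in S -> A \subset B -> A = B.

Definition shatters_b (n : nat) (F : {set {set 'I_n}}) (S : {set 'I_n}) : bool :=
  [set F0 :&: S | F0 in F] == powerset S.

Definition Sh (n : nat) (F : {set {set 'I_n}}) : {set {set 'I_n}} :=
  [set S : {set 'I_n} | shatters_b F S].

Definition s_extremal (n : nat) (F : {set {set 'I_n}}) : Prop :=
  #|Sh F| = #|F|.

Definition Qfam (n : nat) (S H : {set 'I_n}) : {set {set 'I_n}} :=
  [set H :|: B | B in powerset (~: S)].

Definition Hfam (n : nat) (S : {set {set 'I_n}}) : {set {set 'I_n}} :=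
  [set F : {set 'I_n} | [forall T in S, ~~ (T \subset F)]].

Definition Ffam (n : nat) (S : {set {set 'I_n}}) (h : {set 'I_n} -> {set 'I_n})
  : {set {set 'I_n}} :=
  [set F : {set 'I_n} | [forall T in S, F \notin Qfam T (h T)]].

From mathcomp Require Import all_boot.
Set Implicit Arguments. Unset Strict Implicit. Unset Printing Implicit Defensive.

(* The map X |-> agree A X, the set of points where X and A agree, is an
   involution of 2^[n] sending H(S) onto F(S, h_A): X avoids Q_{T, T :&: A}
   exactly when T is not contained in agree A X.  Restricted to any S', it acts
   on traces by an involution of 2^S', so it preserves shattered sets.  Finally
   H(S) is a down-set, and a down-set shatters exactly its own members; hence
   Sh F = Sh H(S) = H(S), which has the same size as its image F. *)

Section Agree.

Variable n : nat.
Implicit Types (A T X Y Z : {set 'I_n}) (F D : {set {set 'I_n}}).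

Definition agree A X : {set 'I_n} := [set t | (t \in X) == (t \in A)].

Lemma agreeK A : involutive (agree A).
Proof. by move=> X; apply/setP=> t; rewrite !inE; case: (t \in X); case: (t \in A). Qed.

Lemma agree_imsetK A F : agree A @: (agree A @: F) = F.
Proof. by rewrite -imset_comp (eq_imset _ (agreeK A)) imset_id. Qed.

Lemma card_agree_imset A F : #|agree A @: F| = #|F|.
Proof. exact/card_imset/(can_inj (agreeK A)). Qed.

Lemma agree_setI A T X : agree A X :&: T = T :&: agree A (X :&: T).
Proof.
apply/setP=> t; rewrite !inE.
by case: (t \in T); rewrite ?andbT ?andbF.
Qed.

Lemma agree_powerset A T : [set T :&: agree A Z | Z in powerset T] = powerset T.
Proof.
have agree_powersetK : {in powerset T, involutive (fun Z => T :&: agree A Z)}.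
  move=> Z; rewrite powersetE => /subsetP sZT; apply/setP=> t; rewrite !inE.
  case tT: (t \in T); last by apply/esym/(contraFF (sZT t)).
  by case: (t \in Z); case: (t \in A).
apply/setP=> Y; apply/imsetP/idP => [[Z _ ->] | YT].
  by rewrite powersetE subsetIl.
by exists (T :&: agree A Y); rewrite ?agree_powersetK // powersetE subsetIl.
Qed.

Lemma shatters_agree A F T : shatters_b F T -> shatters_b (agree A @: F) T.
Proof.
rewrite /shatters_b => /eqP traceF; apply/eqP.
rewrite -[RHS](agree_powerset A) -traceF -!imset_comp.
by apply: eq_imset => X /=; rewrite agree_setI.
Qed.

Lemma Sh_agree A F : Sh (agree A @: F) = Sh F.
Proof.
apply/setP=> T; rewrite !inE; apply/idP/idP; last exact: shatters_agree.
by rewrite -{2}(agree_imsetK A F); apply: shatters_agree.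
Qed.

Lemma Sh_downset D :
  (forall X Y, Y \subset X -> X \in D -> Y \in D) -> Sh D = D.
Proof.
move=> downD; apply/setP=> T; rewrite inE /shatters_b; apply/eqP/idP.
  move=> traceD; have : T \in powerset T by rewrite powersetE.
  by rewrite -traceD => /imsetP[X XD TX]; apply: downD XD; rewrite TX subsetIl.
move=> TD; apply/setP=> Y; apply/imsetP/idP => [[X _ ->] | ].
  by rewrite powersetE subsetIr.
rewrite powersetE => YT; exists Y; last by apply/esym/setIidPl.
exact: downD TD.
Qed.

Lemma Hfam_downset (S : {set {set 'I_n}}) X Y :
  Y \subset X -> X \in Hfam S -> Y \in Hfam S.
Proof.
rewrite !inE => YX /forall_inP HX; apply/forall_inP=> T TS.
by apply: contra (HX T TS) => /subset_trans; apply.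
Qed.

Lemma mem_Qfam T Y X : Y \subset T -> (X \in Qfam T Y) = (X :&: T == Y).
Proof.
move=> YT; apply/imsetP/eqP => [[B] | XT].
  rewrite powersetE -disjoints_subset -setI_eq0 => /eqP BT ->.
  by rewrite setIUl BT setU0; apply/setIidPl.
exists (X :\: T); first by rewrite powersetE setDE subsetIr.
by rewrite -XT setID.
Qed.

Lemma setI_eq_agree A T X : (X :&: T == T :&: A) = (T \subset agree A X).
Proof.
apply/eqP/subsetP => [XT t tT | TaX].
  by move/setP/(_ t): XT; rewrite !inE tT andbT => ->.
apply/setP=> t; rewrite !inE; case tT: (t \in T); rewrite ?andbF //.
by move/(_ t tT): TaX; rewrite inE andbT => /eqP.
Qed.

Lemma Ffam_setI (S : {set {set 'I_n}}) A :
  Ffam S (fun T => T :&: A) = agree A @: Hfam S.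
Proof.
have memF X : (X \in Ffam S (fun T => T :&: A)) = (agree A X \in Hfam S).
  rewrite !inE; apply: eq_forallb => T.
  by rewrite mem_Qfam ?subsetIl // setI_eq_agree.
apply/setP=> X; apply/idP/imsetP => [XF | [Y YH ->]].
  by exists (agree A X); rewrite ?agreeK // -memF.
by rewrite memF agreeK.
Qed.

End Agree.

Theorem proposition14 (n : nat) (S : {set {set 'I_n}}) (A : {set 'I_n}) :
  sperner S ->
  s_extremal (Ffam S (fun T => T :&: A)) /\
  Sh (Ffam S (fun T => T :&: A)) = Hfam S.
Proof.
move=> _.
have ShF : Sh (Ffam S (fun T => T :&: A)) = Hfam S.
  by rewrite Ffam_setI Sh_agree Sh_downset //; apply: Hfam_downset.
split=> //.
by rewrite /s_extremal ShF Ffam_setI card_agree_imset.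
Qed.
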